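(* For every fixed priority order on the agents, the algorithm MaxMatch is a pseudomonotone $2$-rank-approximation algorithm for matching markets, and it is fully lex-truthfully implementable. MaxMatch: start with the empty matching $M$. For $r=1,2,\dots,m$: for every item $i$ not matched in $M$ such that some agent not matched in $M$ has $i$ among its top $r$ items, match $i$ to the highest-priority agent that is not matched in $M$ and has $i$ among its top $r$ items (updating $M$). Output $M$ after stage $m$.
   Context: Matching market: $n$ agents and $m$ items; each agent $j$ reports any strict total order $\succ_j$ on the items. An outcome is a matching of agents to items (each agent gets at most one item, each item at most one agent); an agent not matched gets the null item $\emptyset$, ranked below all items. Agents compare outcomes only through the item they receive. For a matching $M$ and profile $\succ$, $\mathrm{rank}_i(M;\succ)$ is the number of agents assigned one of their top-$i$ items, and $\mathrm{maxrank}_i(\succ)$ is its maximum over all matchings. A (possibly randomized) algorithm is an $\alpha$-rank-approximation algorithm if for every $\succ$ and every $i\in[m]$, $\mathbb{E}[\mathrm{rank}_i(\text{output};\succ)]\ge\mathrm{maxrank}_i(\succ)/\alpha$. A deterministic algorithm $f$ is pseudomonotone if for every agent $j$, every $\succ_{-j}$ and all $\succ_j,\succ'_j$, letting $a$ and $a'$ be the items (possibly $\emptyset$) assigned to $j$ by $f(\succ_j,\succ_{-j})$ and $f(\succ'_j,\succ_{-j})$: either $a\succeq_j a'$ (i.e. $a=a'$ or $a\succ_j a'$), or there is an item $b$ with $b\succ_j a'$ and the position of $b$ in $\succ_j$ is strictly smaller than its position in $\succ'_j$. For a randomized mechanism, each agent $j$ gets a distribution over items $\cup\{\emptyset\}$;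 a distribution $p$ lex-dominates $q\ne p$ w.r.t. $\succ_j$ if at the first element (in the order $\succ_j$, with $\emptyset$ last) where they differ, $p$ is larger. A randomized mechanism is lex-truthful if for all $j,\succ_j,\succ'_j,\succ_{-j}$, $j$'s item distribution under $(\succ_j,\succ_{-j})$ either equals or lex-dominates w.r.t. $\succ_j$ its item distribution under $(\succ'_j,\succ_{-j})$. A deterministic algorithm $f$ is fully lex-truthfully implementable if for every $\varepsilon>0$ there is a lex-truthful randomized mechanism $\mathcal{M}^\varepsilon$ with $\Pr[\mathcal{M}^\varepsilon(\succ)=f(\succ)]\ge1-\varepsilon$ for all profiles $\succ$. *)

From mathcomp Require Import all_boot all_order all_algebra all_fingroup.
From mathcomp Require Import reals.
Set Implicit Arguments. Unset Strict Implicit. Unset Printing Implicit Defensive.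
Import Order.TTheory GRing.Theory Num.Theory.

(* Agents are 'I_n, items are 'I_m.
   A preference of an agent is a permutation p : {perm 'I_m}; p a is the
   (0-based) position of item a in the agent's strict order (0 = best). *)
Definition pref (m : nat) := {perm 'I_m}.
Definition profile (n m : nat) := {ffun 'I_n -> pref m}.

(* An outcome assigns to each agent an item or the null item (None). *)
Definition outcome (n m : nat) := {ffun 'I_n -> option 'I_m}.

Definition is_matching n m (M : outcome n m) : bool :=
  [forall j, forall k, (j != k) ==> (M j != None) ==> (M j != M k)].

Definition in_top m (p : pref m) (i : nat) (a : 'I_m) : bool := p a < i.

Definition rank_i n m (i : nat) (M : outcome n m) (P : profile n m) : nat :=
  #|[set j | if M j is Some a then in_top (P j) i a else false]|.

Definition maxrank_i n m (i : nat) (P : profile n m) : nat :=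
  \max_(M : outcome n m | is_matching M) rank_i i M P.

Definition better m (p : pref m) (x y : option 'I_m) : bool :=
  match x, y with
  | Some a, Some b => p a < p b
  | Some _, None => true
  | None, _ => false
  end.

Definition weakly_better m (p : pref m) (x y : option 'I_m) : bool :=
  (x == y) || better p x y.

Definition upd n m (P : profile n m) (j : 'I_n) (q : pref m) : profile n m :=
  [ffun k => if k == j then q else P k].

Definition algorithm n m := profile n m -> outcome n m.

Definition pseudomonotone n m (f : algorithm n m) : Prop :=
  forall (j : 'I_n) (P : profile n m) (q : pref m),
    let a := f P j in
    let a' := f (upd P j q) j in
    weakly_better (P j) a a' \/
    exists b : 'I_m, better (P j) (Some b) a' /\ P j b < q b.

(* deterministic alpha = 2 rank approximation (expectation = value) *)
Definition two_rank_approx n m (f : algorithm n m) : Prop :=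
  forall (P : profile n m) (i : nat), 1 <= i <= m ->
    maxrank_i i P <= 2 * rank_i i (f P) P.

(* prio : {perm 'I_n}; prio j is the priority rank of agent j (0 = highest). *)

Definition item_matched n m (M : outcome n m) (i : 'I_m) : bool :=
  [exists j, M j == Some i].

Definition eligible n m (P : profile n m) (r : nat) (M : outcome n m)
  (i : 'I_m) (j : 'I_n) : bool :=
  (M j == None) && in_top (P j) r i.

Definition mm_step n m (prio : {perm 'I_n}) (P : profile n m) (r : nat)
  (M : outcome n m) (i : 'I_m) : outcome n m :=
  if item_matched M i then M else
  match [pick j | eligible P r M i j &&
                  [forall k, eligible P r M i k ==> (prio j <= prio k)]] with
  | Some j => [ffun k => if k == j then Some i else M k]
  | None => M
  end.

Definition mm_stage n m (prio : {perm 'I_n}) (P : profile n m) (M : outcome n m)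
  (r : nat) : outcome n m :=
  foldl (mm_step prio P r) M (enum 'I_m).

Definition maxmatch n m (prio : {perm 'I_n}) (P : profile n m) : outcome n m :=
  foldl (mm_stage prio P) [ffun _ => None] (iota 1 m).

Definition rmech (R : realType) n m := profile n m -> {ffun outcome n m -> R}.

Definition valid_rmech (R : realType) n m (D : rmech R n m) : Prop :=
  forall P : profile n m,
    (forall M, (0 <= D P M)%R) /\ ((\sum_M D P M)%R = 1%R) /\
    (forall M, ~~ is_matching M -> D P M = 0%R).

Definition item_dist (R : realType) n m (D : {ffun outcome n m -> R}) (j : 'I_n)
  (x : option 'I_m) : R :=
  (\sum_(M : outcome n m | M j == x) D M)%R.

Definition lex_dom (R : realType) m (pr : pref m) (p q : option 'I_m -> R) : Prop :=
  exists x, (q x < p x)%R /\ (forall y, better pr y x -> p y = q y).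

Definition lex_truthful (R : realType) n m (D : rmech R n m) : Prop :=
  forall (j : 'I_n) (P : profile n m) (q : pref m),
    let d := item_dist (D P) j in
    let d' := item_dist (D (upd P j q)) j in
    (forall x, d x = d' x) \/ lex_dom (P j) d d'.

Definition fully_lex_implementable (R : realType) n m (f : algorithm n m) : Prop :=
  forall eps : R, (0 < eps)%R ->
    exists D : rmech R n m,
      valid_rmech D /\ lex_truthful D /\
      forall P : profile n m, (1 - eps <= D P (f P))%R.

(* MaxMatch only ever extends its partial matching, and after stage t every
   agent still unmatched finds all of its top-t items taken.  Hence the agents
   that any matching places within their top i are either matched by stage i
   or hold an item assigned by stage i, which gives the factor 2.

   For pseudomonotonicity, run MaxMatch on the true profile and on a report of
   agent j that does not move item a0 up.  The two runs coincide until j's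
   report first matters, and from then on either j truthfully holds something
   at least as good as a0, or the misreport has lost a0 for j for good.

   For the implementation, mix MaxMatch with a small lottery giving one agent
   one item, with weight strictly decreasing in the item's reported position.
   Truth-telling then wins lexicographically at the first item a misreport
   demotes, and pseudomonotonicity puts whatever MaxMatch gains from the
   misreport below that item. *)

From mathcomp Require Import all_boot all_order all_algebra all_fingroup.
From mathcomp Require Import reals ring zify lra.
Set Implicit Arguments. Unset Strict Implicit. Unset Printing Implicit Defensive.
Import Order.TTheory GRing.Theory Num.Theory.

Section Best.
Variables (n : nat) (prio : {perm 'I_n}).
Implicit Types E : pred 'I_n.

Definition best E : option 'I_n :=
  [pick l | E l && [forall k, E k ==> (prio l <= prio k)]].

Lemma best_Some E l : best E = Some l -> E l /\ forall k, E k -> prio l <= prio k.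
Proof.
rewrite /best; case: pickP => // l' /andP[El /forallP min_l] [<-].
by split=> // k Ek; apply: (implyP (min_l k)).
Qed.

Lemma best_None E : best E = None -> forall k, ~~ E k.
Proof.
rewrite /best; case: pickP => // no_best _ k; apply/negP => Ek.
case: (arg_minnP (fun k => nat_of_ord (prio k)) Ek) => l El min_l.
move/negP: (no_best l); rewrite El; apply; apply/forallP => k'.
by apply/implyP; apply: min_l.
Qed.

Lemma best_eq E l : E l -> (forall k, E k -> prio l <= prio k) -> best E = Some l.
Proof.
move=> El min_l; case B: (best E) => [l'|]; last by move: (best_None B l); rewrite El.
have [El' min_l'] := best_Some B; congr Some.
apply: (@perm_inj _ prio); apply: val_inj; apply/eqP.
by rewrite eqn_leq min_l' ?min_l.
Qed.

Lemma best_agree_except (EA EB : pred 'I_n) j :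
  (forall k, k != j -> EA k = EB k) ->
  [\/ best EA = best EB, best EA = Some j | best EB = Some j].
Proof.
move=> EAB.
case BA: (best EA) => [lA|]; case BB: (best EB) => [lB|].
- have [-> | nA] := eqVneq lA j; first by constructor 2.
  have [-> | nB] := eqVneq lB j; first by constructor 3.
  have [EAl minA] := best_Some BA; have [EBl minB] := best_Some BB.
  constructor 1; congr Some; apply: (@perm_inj _ prio); apply: val_inj; apply/eqP.
  by rewrite eqn_leq minA ?EAB // minB // -EAB.
- have [-> | nA] := eqVneq lA j; first by constructor 2.
  by have [EAl _] := best_Some BA; move: (best_None BB lA); rewrite -EAB ?EAl.
- have [-> | nB] := eqVneq lB j; first by constructor 3.
  by have [EBl _] := best_Some BB; move: (best_None BA lB); rewrite EAB ?EBl.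
- by constructor 1.
Qed.

End Best.

Section Extension.
Variables n m : nat.
Implicit Types M : outcome n m.

Definition empty_match : outcome n m := [ffun _ => None].

Lemma empty_match_matching : is_matching empty_match.
Proof. by apply/forallP => l; apply/forallP => l'; rewrite ffunE eqxx implybT. Qed.

Definition extends M M' := forall l x, M l = Some x -> M' l = Some x.

Lemma extends_trans M1 M2 M3 : extends M1 M2 -> extends M2 M3 -> extends M1 M3.
Proof. by move=> h12 h23 l x /h12 /h23. Qed.

Lemma extends_None M M' l : extends M M' -> M' l = None -> M l = None.
Proof. by move=> ext; case E: (M l) => [x|] //; rewrite (ext _ _ E). Qed.

Lemma extends_matched M M' x : extends M M' -> item_matched M x -> item_matched M' x.
Proof. by move=> ext /existsP[l /eqP/ext Ml]; apply/existsP; exists l; rewrite Ml. Qed.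

Lemma extends_foldl T (f : outcome n m -> T -> outcome n m) :
  (forall M t, extends M (f M t)) -> forall s M, extends M (foldl f M s).
Proof. by move=> ext; elim=> [|t s IH] M //=; apply: extends_trans (ext M t) (IH _). Qed.

End Extension.

Section Run.
Variables (n m : nat) (prio : {perm 'I_n}) (P : profile n m).
Implicit Types M : outcome n m.

Lemma mm_step_best r M i :
  mm_step prio P r M i =
  if item_matched M i then M else
  if best prio (eligible P r M i) is Some l
  then [ffun k => if k == l then Some i else M k] else M.
Proof. by []. Qed.

Lemma mm_stepP r M i :
  mm_step prio P r M i = M \/
  exists l, [/\ ~~ item_matched M i, M l = None, P l i < r &
    mm_step prio P r M i = [ffun k => if k == l then Some i else M k]].
Proof.
rewrite mm_step_best; case: ifP => matched; first by left.
case B: best => [l|]; last by left.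
have [/andP[/eqP Ml top] _] := best_Some B.
by right; exists l; split => //; rewrite matched.
Qed.

Lemma mm_step_extends r M i : extends M (mm_step prio P r M i).
Proof.
move=> l x Ml; have [-> // | [l' [_ Ml' _ ->]]] := mm_stepP r M i.
by rewrite ffunE; case: eqP => // ll'; rewrite ll' Ml' in Ml.
Qed.

Lemma mm_stage_extends M r : extends M (mm_stage prio P M r).
Proof. by apply: extends_foldl => M' i; apply: mm_step_extends. Qed.

Lemma mm_step_matching r M i : is_matching M -> is_matching (mm_step prio P r M i).
Proof.
move=> match_M; have [-> // | [l [unmatched Ml _ ->]]] := mm_stepP r M i.
have notin_M k : M k != Some i.
  by apply: contra unmatched => /eqP Mk; apply/existsP; exists k; rewrite Mk.
apply/forallP => a; apply/forallP => b; apply/implyP => ab; rewrite !ffunE.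
have [al | al] := eqVneq a l; have [bl | bl] := eqVneq b l.
- by rewrite al bl eqxx in ab.
- by rewrite [_ == M b]eq_sym notin_M implybT.
- by rewrite notin_M implybT.
- exact: (implyP (forallP (forallP match_M a) b) ab).
Qed.

Lemma maxmatch_matching : is_matching (maxmatch prio P).
Proof.
rewrite /maxmatch -/(empty_match n m); move: (empty_match_matching n m).
elim: (iota 1 m) (empty_match n m) => [|r s IH] M match_M //=.
apply: IH; rewrite /mm_stage; elim: (enum 'I_m) M match_M => [|i s' IH'] M match_M //=.
exact/IH'/mm_step_matching.
Qed.

Definition saturated r M := forall l x, M l = None -> P l x < r -> item_matched M x.

Definition within_top r M := forall l x, M l = Some x -> P l x < r.

Lemma saturated_extends r M M' : extends M M' -> saturated r M -> saturated r M'.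
Proof. by move=> ext sat l x /(extends_None ext) /sat sat_l /sat_l /(extends_matched ext). Qed.

Lemma mm_stage_saturated r M : saturated r (mm_stage prio P M r).
Proof.
move=> l x; rewrite /mm_stage.
have : x \in enum 'I_m by rewrite mem_enum.
elim: (enum 'I_m) M => [|y s IH] M //=; rewrite inE => /orP[/eqP <- | xs]; last exact: IH.
set M' := mm_step prio P r M x => Ml top.
have ext : extends M' (foldl (mm_step prio P r) M' s).
  by apply: extends_foldl => M'' i; apply: mm_step_extends.
apply: (extends_matched ext); move: (extends_None ext Ml).
rewrite /M' mm_step_best; case: ifP => // _.
case B: best => [l'|] M'l; first by apply/existsP; exists l'; rewrite ffunE eqxx.
by move: (best_None B l); rewrite /eligible M'l eqxx /in_top top.
Qed.

Lemma mm_step_within_top r M i : within_top r M -> within_top r (mm_step prio P r M i).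
Proof.
move=> topM l x; have [-> | [l' [_ _ top ->]]] := mm_stepP r M i; first exact: topM.
by rewrite ffunE; case: eqP => [-> [<-] // | _]; apply: topM.
Qed.

Definition maxmatch_upto t := foldl (mm_stage prio P) (empty_match n m) (iota 1 t).

Lemma maxmatch_upto_succ t : maxmatch_upto t.+1 = mm_stage prio P (maxmatch_upto t) t.+1.
Proof. by rewrite /maxmatch_upto -[t.+1]addn1 iotaD foldl_cat addnC. Qed.

Lemma maxmatch_upto_saturated t : saturated t (maxmatch_upto t).
Proof. by case: t => [|t] l x //; rewrite maxmatch_upto_succ; apply: mm_stage_saturated. Qed.

Lemma maxmatch_upto_within_top t : within_top t (maxmatch_upto t).
Proof.
elim: t => [|t IH] l x; first by rewrite ffunE.
rewrite maxmatch_upto_succ /mm_stage.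
have : within_top t.+1 (maxmatch_upto t) by move=> l' x' /IH /ltnW.
elim: (enum 'I_m) (maxmatch_upto t) => [|y s IH'] M topM //=; first exact: topM.
exact/IH'/mm_step_within_top.
Qed.

Lemma maxmatch_uptoE : maxmatch_upto m = maxmatch prio P.
Proof. by []. Qed.

Lemma maxmatch_extends_upto t : t <= m -> extends (maxmatch_upto t) (maxmatch prio P).
Proof.
move=> tm; have split_m : iota 1 m = iota 1 t ++ iota (1 + t) (m - t).
  by rewrite -iotaD subnKC.
rewrite /maxmatch split_m foldl_cat.
by apply: extends_foldl => M r; apply: mm_stage_extends.
Qed.

End Run.

Lemma card_matching_preimage n m (M : outcome n m) (X : {set option 'I_m}) :
  is_matching M -> None \notin X -> #|[set l | M l \in X]| <= #|X|.
Proof.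
move=> match_M NX.
have inj : {in [set l | M l \in X] &, injective M}.
  move=> l l'; rewrite !inE => MlX _ Mll'; apply/eqP; apply: contraT => ll'.
  have Ml : M l != None by apply: contraNneq NX => <-.
  by move: (implyP (implyP (forallP (forallP match_M l) l') ll') Ml); rewrite Mll' eqxx.
rewrite -(card_in_imset inj); apply: subset_leq_card.
by apply/subsetP => x /imsetP[l]; rewrite inE => MlX ->.
Qed.

Lemma maxmatch_two_rank_approx n m (prio : {perm 'I_n}) :
  two_rank_approx (@maxmatch n m prio).
Proof.
move=> P i /andP[_ im].
set Mi := maxmatch_upto prio P i.
set A := [set l | Mi l != None].
have rank_A : #|A| <= rank_i i (maxmatch prio P) P.
  apply: subset_leq_card; apply/subsetP => l; rewrite !inE.
  case Mil: (Mi l) => [x|] // _.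
  by rewrite (maxmatch_extends_upto im Mil) /in_top (maxmatch_upto_within_top Mil).
apply: leq_trans (leq_mul (leqnn 2) rank_A); apply/bigmax_leqP => M match_M.
set B := [set l | if M l is Some a then in_top (P l) i a else false].
set C := [set l | M l \in Mi @: A].
have B_AC : B \subset A :|: C.
  apply/subsetP => l; rewrite !inE; case Ml: (M l) => [x|] // top.
  case Mil: (Mi l) => [y|] //=.
  have /existsP[l' /eqP Mil'] := maxmatch_upto_saturated Mil top.
  by apply/imsetP; exists l'; rewrite // inE Mil'.
have card_C : #|C| <= #|A|.
  apply: leq_trans (card_matching_preimage match_M _) (leq_imset_card _ _).
  by apply/negP => /imsetP[l]; rewrite inE => Mil NMil; rewrite -NMil in Mil.
rewrite /rank_i -/B mul2n -addnn (leq_trans (subset_leq_card B_AC)) //.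
by rewrite (leq_trans (leq_card_setU A C).1) // leq_add2l.
Qed.

Lemma perm_pos_le m (p q : {perm 'I_m}) a :
  (forall b, p b < p a -> q b <= p b) -> p a <= q a.
Proof.
move=> q_prefix; rewrite leqNgt; apply/negP => qa_lt.
pose S := [set b | p b <= p a].
have qS : q @: S \subset [set k : 'I_m | k < p a].
  apply/subsetP => k /imsetP[b]; rewrite !inE => pb ->.
  have [-> // | ba] := eqVneq b a.
  have pb_lt : p b < p a.
    by rewrite ltn_neqAle pb andbT; apply: contra ba => /eqP/val_inj/perm_inj ->.
  exact: leq_ltn_trans (q_prefix _ pb_lt) pb_lt.
have pS : [set k : 'I_m | k < p a] \proper p @: S.
  apply/properP; split.
    apply/subsetP => k; rewrite inE => k_lt; apply/imsetP.
    by exists ((p^-1)%g k); rewrite ?inE permKV // ltnW.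
  by exists (p a); [apply: imset_f; rewrite inE | rewrite inE ltnn].
have := proper_card pS; rewrite (card_imset _ (@perm_inj _ p)).
by rewrite -(card_imset _ (@perm_inj _ q)) ltnNge subset_leq_card.
Qed.

Section Lockstep.
Variables (n m : nat) (prio : {perm 'I_n}) (P : profile n m).
Variables (j : 'I_n) (q : pref m) (a0 : 'I_m).
Hypothesis a0_not_raised : P j a0 <= q a0.
Local Notation P' := (upd P j q).

(* Each disjunct survives any further extension of the two runs, and each rules
   out that j gets a0 under the misreport but something worse truthfully. *)
Definition settled (M M' : outcome n m) :=
  [\/ exists2 i, M j = Some i & P j i <= P j a0,
      exists2 i, M' j = Some i & i != a0
    | exists2 l, l != j & M' l = Some a0].

Lemma settled_extends M1 M1' M2 M2' :
  extends M1 M2 -> extends M1' M2' -> settled M1 M1' -> settled M2 M2'.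
Proof.
move=> ext ext' [[i /ext Mi le] | [i /ext' Mi ne] | [l ne /ext' Ml]].
- by constructor 1; exists i.
- by constructor 2; exists i.
- by constructor 3; exists l.
Qed.

Lemma settled_truthful_best t M i :
  saturated P t M -> ~~ item_matched M i ->
  best prio (eligible P t.+1 M i) = Some j ->
  settled (mm_step prio P t.+1 M i) (mm_step prio P' t.+1 M i).
Proof.
move=> sat unmatched Bj; have [/andP[/eqP Mj top] _] := best_Some Bj.
have [le | lt] := leqP (P j i) (P j a0).
  by constructor 1; exists i; rewrite // mm_step_best (negbTE unmatched) Bj ffunE eqxx.
(* a0 ranks above i, hence is in j's top t: saturation gave it to someone else *)
have /existsP[l /eqP Ml] := sat j a0 Mj (leq_trans lt top).
constructor 3; exists l; last exact: mm_step_extends Ml.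
by apply: contraPneq Ml => ->; rewrite Mj.
Qed.

Lemma lockstep_step t M i :
  saturated P t M ->
  mm_step prio P t.+1 M i = mm_step prio P' t.+1 M i \/
  settled (mm_step prio P t.+1 M i) (mm_step prio P' t.+1 M i).
Proof.
move=> sat; case matched: (item_matched M i).
  by left; rewrite !mm_step_best matched.
have elig_except k : k != j -> eligible P t.+1 M i k = eligible P' t.+1 M i k.
  by move=> kj; rewrite /eligible /in_top ffunE (negbTE kj).
have [same | Bj | Bj'] := best_agree_except prio elig_except.
- by left; rewrite !mm_step_best matched same.
- by right; apply: settled_truthful_best; rewrite ?matched.
have [/andP[/eqP Mj top] min_j] := best_Some Bj'.
have [ia0 | ne] := eqVneq i a0; last first.
  by right; constructor 2; exists i; rewrite // mm_step_best matched Bj' ffunE eqxx.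
(* not having raised a0, j also wins it truthfully against the unchanged others *)
right; apply: settled_truthful_best; rewrite ?matched //.
apply: best_eq => [|k Ek].
  rewrite /eligible Mj eqxx /in_top ia0 (leq_ltn_trans a0_not_raised) //.
  by move: top; rewrite /in_top ffunE eqxx ia0.
by have [-> // | kj] := eqVneq k j; apply: min_j; rewrite -elig_except.
Qed.

Lemma lockstep_stage t M M' :
  saturated P t M -> M = M' \/ settled M M' ->
  mm_stage prio P M t.+1 = mm_stage prio P' M' t.+1 \/
  settled (mm_stage prio P M t.+1) (mm_stage prio P' M' t.+1).
Proof.
rewrite /mm_stage; elim: (enum 'I_m) M M' => [|i s IH] M M' sat lockstep //=.
apply: IH; first by apply: saturated_extends sat; apply: mm_step_extends.
case: lockstep => [<- | settled_M]; first exact: lockstep_step.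
by right; apply: settled_extends settled_M; apply: mm_step_extends.
Qed.

Lemma lockstep_upto t :
  maxmatch_upto prio P t = maxmatch_upto prio P' t \/
  settled (maxmatch_upto prio P t) (maxmatch_upto prio P' t).
Proof.
elim: t => [|t IH]; first by left.
by rewrite !maxmatch_upto_succ; apply: lockstep_stage IH; apply: maxmatch_upto_saturated.
Qed.

Lemma maxmatch_lockstep :
  maxmatch prio P' j = Some a0 -> weakly_better (P j) (maxmatch prio P j) (Some a0).
Proof.
move=> Mj'; have := lockstep_upto m; rewrite !maxmatch_uptoE.
case=> [-> | [[i -> le] | [i Mj ne] | [l lj Ml]]].
- by rewrite Mj' /weakly_better eqxx.
- rewrite /weakly_better /= orbC ltn_neqAle le andbT.
  by case: eqVneq => // /val_inj/perm_inj ->; rewrite eqxx.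
- by move: ne; rewrite Mj' in Mj; case: Mj => ->; rewrite eqxx.
- have := implyP (implyP (forallP (forallP (maxmatch_matching prio P') l) j) lj).
  by rewrite Ml Mj' eqxx => /(_ isT).
Qed.

End Lockstep.

Lemma maxmatch_pseudomonotone n m (prio : {perm 'I_n}) :
  pseudomonotone (@maxmatch n m prio).
Proof.
move=> j P q /=; case Mj': (maxmatch prio (upd P j q) j) => [a0|]; last first.
  by left; case: (maxmatch prio P j).
have [/existsP[b /andP[b_above b_raised]] | none_raised] :=
  boolP [exists b, (P j b < P j a0) && (P j b < q b)].
  by right; exists b.
left; apply: maxmatch_lockstep Mj'; apply: perm_pos_le => b b_above.
by rewrite leqNgt; apply: contra none_raised => b_raised; apply/existsP; exists b; rewrite b_above.
Qed.

Lemma better_trans m (p : pref m) x y z : better p x y -> better p y z -> better p x z.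
Proof. by case: x => [x|]; case: y => [y|]; case: z => [z|] //=; apply: ltn_trans. Qed.

Lemma better_total m (p : pref m) x y : ~~ weakly_better p x y -> better p y x.
Proof.
case: x => [x|]; case: y => [y|] //=; rewrite /weakly_better /= negb_or -leqNgt.
by rewrite leq_eqVlt => /andP[neq /orP[/eqP/val_inj/perm_inj eq | //]]; rewrite eq eqxx in neq.
Qed.

Local Open Scope ring_scope.

Section LexDominance.
Variables (R : numDomainType) (m : nat) (pr : pref m).
Implicit Types f g : 'I_m -> R.

Definition lex_dom_at f g x := g x < f x /\ forall y, (pr y < pr x)%N -> f y = g y.

Lemma lex_dom_at_addl f1 g1 f2 g2 x :
  (forall y, (pr y <= pr x)%N -> f1 y = g1 y) -> lex_dom_at f2 g2 x ->
  lex_dom_at (fun y => f1 y + f2 y) (fun y => g1 y + g2 y) x.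
Proof.
move=> agree [lt eq2]; split; first by rewrite (agree x (leqnn _)) ltrD2l.
by move=> y y_lt; rewrite (agree y (ltnW y_lt)) (eq2 y y_lt).
Qed.

Lemma lex_dom_at_addr f1 g1 f2 g2 x :
  lex_dom_at f1 g1 x -> (forall y, (pr y <= pr x)%N -> f2 y = g2 y) ->
  lex_dom_at (fun y => f1 y + f2 y) (fun y => g1 y + g2 y) x.
Proof.
move=> [lt eq1] agree; split; first by rewrite (agree x (leqnn _)) ltrD2r.
by move=> y y_lt; rewrite (agree y (ltnW y_lt)) (eq1 y y_lt).
Qed.

Lemma lex_dom_at_add f1 g1 f2 g2 x1 x2 :
  lex_dom_at f1 g1 x1 -> lex_dom_at f2 g2 x2 ->
  exists x, lex_dom_at (fun y => f1 y + f2 y) (fun y => g1 y + g2 y) x.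
Proof.
move=> [lt1 eq1] [lt2 eq2]; case: (ltngtP (pr x1) (pr x2)) => [lt12 | lt21 | eq12].
- exists x1; apply: lex_dom_at_addr => // y y_le.
  exact: eq2 (leq_ltn_trans y_le lt12).
- exists x2; apply: lex_dom_at_addl => // y y_le.
  exact: eq1 (leq_ltn_trans y_le lt21).
- have x12 : x1 = x2 by apply: (@perm_inj _ pr); apply: val_inj.
  exists x1; split; first by rewrite ltrD //; rewrite x12.
  by move=> y y_lt; rewrite (eq1 y y_lt) (eq2 y _) // -x12.
Qed.

Lemma lex_dom_at_scale c f g x :
  0 < c -> lex_dom_at f g x -> lex_dom_at (fun y => c * f y) (fun y => c * g y) x.
Proof. by move=> c_gt0 [lt eq]; split=> [|y /eq ->]; first rewrite ltr_pM2l. Qed.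

Lemma better_lex_dom_at z a :
  better pr (Some z) a ->
  lex_dom_at (fun y => (Some z == Some y)%:R) (fun y => (a == Some y)%:R) z.
Proof.
move=> z_a; split.
  case: a z_a => [a|] /= z_a; last by rewrite eqxx ltr01.
  have -> : (Some a == Some z) = false.
    by apply: contraTF z_a => /eqP [->]; rewrite ltnn.
  by rewrite eqxx ltr01.
move=> y y_z; have -> : (Some z == Some y) = false.
  by apply: contraTF y_z => /eqP [->]; rewrite ltnn.
by case: a z_a => [a|] //= z_a; case: eqP => // -[a_y]; move: (ltn_trans y_z z_a); rewrite a_y ltnn.
Qed.

Lemma worse_indicator b a y :
  better pr (Some b) a -> (pr y <= pr b)%N -> (a == Some y)%:R = 0 :> R.
Proof.
case: a => [a|] //= b_a y_b; case: eqP => // -[a_y].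
by move: (leq_ltn_trans y_b b_a); rewrite a_y ltnn.
Qed.

Lemma perm_lex_dom (w : nat -> R) (q : pref m) :
  (forall s t, (s < t < m)%N -> w t < w s) -> pr != q ->
  exists y0, lex_dom_at (fun y => w (pr y)) (fun y => w (q y)) y0 /\
             forall b, (pr b < q b)%N -> (pr y0 <= pr b)%N.
Proof.
move=> w_decr pr_q; have [y1 y1_moved] : exists y, q y != pr y.
  apply/existsP; apply: contraR pr_q; rewrite negb_exists => /forallP fixed.
  by apply/eqP/permP => y; apply/esym/eqP; apply: negbNE (fixed y).
have [y0 y0_moved y0_first] :=
  @arg_minnP _ y1 (fun y => q y != pr y) (fun y => nat_of_ord (pr y)) y1_moved.
have above y : (pr y < pr y0)%N -> q y = pr y.
  by move=> y_lt; apply/eqP; apply: contraLR y_lt => /y0_first; rewrite -leqNgt.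
have lowered : (pr y0 < q y0)%N.
  rewrite ltn_neqAle perm_pos_le => [|b /above ->] //; rewrite andbT.
  by apply: contra y0_moved => /eqP/val_inj ->.
exists y0; split; first split.
- by apply: w_decr; rewrite lowered ltn_ord.
- by move=> y /above ->.
- by move=> b raised; rewrite leqNgt; apply: contraL raised => /above ->; rewrite ltnn.
Qed.

End LexDominance.

Lemma lex_dom_of_at (R : realType) m (pr : pref m) (d d' : option 'I_m -> R) f g x :
  (forall y, d (Some y) = f y) -> (forall y, d' (Some y) = g y) ->
  lex_dom_at pr f g x -> lex_dom pr d d'.
Proof.
move=> df d'g [lt agree]; exists (Some x); rewrite df d'g; split=> // -[y|] //= y_x.
by rewrite df d'g agree.
Qed.

Lemma sum_indicator (R : pzSemiRingType) (T : finType) (p : pred T) (t0 : T) :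
  \sum_(t | p t) (t == t0)%:R = (p t0)%:R :> R.
Proof.
have [p_t0 | not_p_t0] := boolP (p t0).
  by rewrite (bigD1 t0) //= eqxx big1 ?addr0 // => t /andP[_ /negbTE ->].
by rewrite big1 // => t p_t; case: eqP => // t_t0; rewrite -t_t0 p_t in not_p_t0.
Qed.

Section Mechanism.
Variables (R : realType) (n m : nat) (prio : {perm 'I_n}).
Implicit Types (P : profile n m) (M : outcome n m).

Definition single_match k b : outcome n m := [ffun l => if l == k then Some b else None].

Lemma single_match_matching k b : is_matching (single_match k b).
Proof.
apply/forallP => l; apply/forallP => l'; apply/implyP => ll'; rewrite !ffunE.
have [lk | //] := eqVneq l k.
by rewrite -lk [l' == l]eq_sym (negbTE ll').
Qed.

(* Positive on positions t < m and strictly decreasing there; the denominator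
   keeps the total weight of the n * m agent-item pairs below 1. *)
Definition pos_weight (t : nat) : R := (m - t)%:R / (n * m * m).+1%:R.

Definition total_weight P : R := \sum_k \sum_b pos_weight (P k b).

Definition lottery P M : R :=
  \sum_k \sum_b pos_weight (P k b) * (M == single_match k b)%:R
  + (1 - total_weight P) * (M == empty_match n m)%:R.

Definition perturbed_maxmatch (e : R) : rmech R n m :=
  fun P => [ffun M => (1 - e) * (M == maxmatch prio P)%:R + e * lottery P M].

Lemma pos_weight_ge0 t : 0 <= pos_weight t.
Proof. by rewrite divr_ge0 ?ler0n. Qed.

Lemma pos_weight_decr s t : (s < t < m)%N -> pos_weight t < pos_weight s.
Proof. by move=> st; rewrite ltr_pM2r ?invr_gt0 ?ltr0n // ltr_nat; lia. Qed.

Lemma total_weight_le1 P : total_weight P <= 1.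
Proof.
have -> : total_weight P = (\sum_k \sum_b (m - P k b))%N%:R / (n * m * m).+1%:R.
  by rewrite natr_sum mulr_suml; apply: eq_bigr => k _; rewrite natr_sum mulr_suml.
rewrite ler_pdivrMr ?ltr0n // mul1r ler_nat.
apply: leq_trans (_ : \sum_(k : 'I_n) \sum_(b : 'I_m) m <= _)%N.
  by apply: leq_sum => k _; apply: leq_sum => b _; apply: leq_subr.
by rewrite !sum_nat_const !card_ord mulnA ltnW.
Qed.

Lemma lottery_ge0 P M : 0 <= lottery P M.
Proof.
rewrite addr_ge0 ?mulr_ge0 ?subr_ge0 ?total_weight_le1 //.
by apply: sumr_ge0 => k _; apply: sumr_ge0 => b _; rewrite mulr_ge0 ?pos_weight_ge0.
Qed.

Lemma sum_lottery P (p : pred (outcome n m)) :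
  \sum_(M | p M) lottery P M =
  \sum_k \sum_b pos_weight (P k b) * (p (single_match k b))%:R
  + (1 - total_weight P) * (p (empty_match n m))%:R.
Proof.
rewrite big_split /= -mulr_sumr sum_indicator; congr (_ + _).
rewrite exchange_big /=; apply: eq_bigr => k _.
by rewrite exchange_big /=; apply: eq_bigr => b _; rewrite -mulr_sumr sum_indicator.
Qed.

Lemma perturbed_maxmatch_valid e : 0 <= e <= 1 -> valid_rmech (perturbed_maxmatch e).
Proof.
move=> /andP[e_ge0 e_le1] P; split; [|split].
- by move=> M; rewrite ffunE addr_ge0 ?mulr_ge0 ?subr_ge0 ?lottery_ge0.
- rewrite (eq_bigr _ (fun M _ => ffunE _ M)) big_split /= -!mulr_sumr.
  rewrite (sum_indicator _ predT) (sum_lottery P predT) /=.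
  have -> : \sum_k \sum_b pos_weight (P k b) * (predT (single_match k b))%:R
            = total_weight P.
    by apply: eq_bigr => k _; apply: eq_bigr => b _; rewrite mulr1.
  ring.
- move=> M not_matching; rewrite ffunE.
  have not_eq M' : is_matching M' -> (M == M') = false.
    by move=> match_M'; apply: contraNF not_matching => /eqP ->.
  rewrite not_eq ?maxmatch_matching // /lottery not_eq ?empty_match_matching //.
  rewrite big1 => [|k _]; last first.
    by rewrite big1 // => b _; rewrite not_eq ?single_match_matching ?mulr0.
  by rewrite !mulr0n; ring.
Qed.

Lemma perturbed_maxmatch_ge e P :
  0 <= e -> 1 - e <= perturbed_maxmatch e P (maxmatch prio P).
Proof. by move=> e_ge0; rewrite ffunE eqxx mulr1 lerDl mulr_ge0 ?lottery_ge0. Qed.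

Lemma item_dist_perturbed e P j y :
  item_dist (perturbed_maxmatch e P) j (Some y) =
  (1 - e) * (maxmatch prio P j == Some y)%:R + e * pos_weight (P j y).
Proof.
rewrite /item_dist (eq_bigr _ (fun M _ => ffunE _ M)) big_split /= -!mulr_sumr.
rewrite (sum_indicator _ (fun M : outcome n m => M j == Some y)) sum_lottery.
congr (_ + _ * _); rewrite ffunE /= mulr0 addr0.
rewrite (bigD1 j) //= [X in _ + X]big1 ?addr0 => [|k kj]; last first.
  have jk : (j == k) = false by rewrite eq_sym (negbTE kj).
  by apply: big1 => b _; rewrite ffunE jk /= mulr0.
rewrite (bigD1 y) //= [X in _ + X]big1 ?addr0 => [|b b_y]; last first.
  by rewrite ffunE eqxx /= (inj_eq (@Some_inj _)) (negbTE b_y) mulr0.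
by rewrite ffunE !eqxx mulr1.
Qed.

Lemma perturbed_maxmatch_lex_truthful e :
  0 < e < 1 -> lex_truthful (perturbed_maxmatch e).
Proof.
move=> /andP[e_gt0 e_lt1] j P q; have [<- | moved] := eqVneq (P j) q.
  have -> : upd P j (P j) = P by apply/ffunP => k; rewrite ffunE; case: eqP => [-> |].
  by left.
right; set a := maxmatch prio P j; set a' := maxmatch prio (upd P j q) j.
have [y0 [lottery_lex y0_first]] := perm_lex_dom pos_weight_decr moved.
suff [x lex] : exists x, lex_dom_at (P j)
    (fun y => (1 - e) * (a == Some y)%:R + e * pos_weight (P j y))
    (fun y => (1 - e) * (a' == Some y)%:R + e * pos_weight (q y)) x.
  by apply: lex_dom_of_at lex => y; rewrite item_dist_perturbed // ffunE eqxx.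
have e_lex := lex_dom_at_scale e_gt0 lottery_lex.
have e'_gt0 : 0 < 1 - e by rewrite subr_gt0.
have [/orP[/eqP a_a' | a_a'] | not_wb] := boolP (weakly_better (P j) a a').
- by exists y0; apply: lex_dom_at_addl e_lex => y _; rewrite a_a'.
- case: a a_a' => [z|] // z_a'.
  exact: lex_dom_at_add (lex_dom_at_scale e'_gt0 (better_lex_dom_at R z_a')) e_lex.
(* The misreport gets a better MaxMatch item, but pseudomonotonicity places it
   below y0, where the lottery has already decided. *)
have [wb | [b [b_a' b_raised]]] := maxmatch_pseudomonotone prio j P q.
  by case/negP: not_wb; exact: wb.
have y_b y : (P j y <= P j y0)%N -> (P j y <= P j b)%N.
  by move=> y_y0; apply: leq_trans y_y0 (y0_first _ b_raised).
have a_worse := better_trans b_a' (better_total not_wb).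
exists y0; apply: lex_dom_at_addl e_lex => y /y_b y_b'.
by rewrite (worse_indicator R b_a' y_b') (worse_indicator R a_worse y_b').
Qed.

End Mechanism.

Theorem theorem6 (R : realType) (n m : nat) (prio : {perm 'I_n}) :
  (forall P : profile n m, is_matching (maxmatch prio P)) /\
  pseudomonotone (@maxmatch n m prio) /\
  two_rank_approx (@maxmatch n m prio) /\
  fully_lex_implementable R (@maxmatch n m prio).
Proof.
split; first by move=> P; apply: maxmatch_matching.
split; first exact: maxmatch_pseudomonotone.
split; first exact: maxmatch_two_rank_approx.
move=> eps eps_gt0; pose e := Num.min eps 2^-1.
have e_gt0 : 0 < e by rewrite lt_min eps_gt0 invr_gt0 ltr0n.
have e_le_eps : e <= eps by rewrite ge_min lexx.
have e_le_half : e <= 2^-1 by rewrite ge_min lexx orbT.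
have e_lt1 : e < 1 by lra.
exists (perturbed_maxmatch prio e); split; [|split].
- by apply: perturbed_maxmatch_valid; rewrite (ltW e_gt0) (ltW e_lt1).
- by apply: perturbed_maxmatch_lex_truthful; rewrite e_gt0 e_lt1.
- by move=> P; apply: le_trans (perturbed_maxmatch_ge _ _ (ltW e_gt0)); lra.
Qed.
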